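(* Let $\mathcal{G}=\langle\mathbb{V},\mathbb{E}\rangle$ and the bijection $e$ be as in the context, and let $\pi$ be an $\mathcal{H}^{(\ast)}$-partition of $\mathcal{P}(\mathcal{G},e)$ in which every gadget $\mathcal{N}_v$, $v\in\mathbb{V}$, is well-oriented. Then $\{\langle v,u\rangle:\{\langle v,u\rangle\}\in\pi\}$ (the set of arcs of $\mathcal{G}$ which, as vertices of $\mathcal{P}(\mathcal{G},e)$, form singleton blocks of $\pi$) is a feedback arc set of $\mathcal{G}$ of size at most $|\pi|-|\mathbb{V}|\cdot(|\mathbb{E}|+1)$.
   Context: Standing assumption: $\mathcal{G}=\langle\mathbb{V},\mathbb{E}\rangle$ is a finite directed graph with $\mathbb{V}\ne\emptyset$, without self-loops, in which every vertex has in-degree $1$ or out-degree $1$; let $m=|\mathbb{E}|$ and let $e:\mathbb{E}\to\{1,\dots,m\}$ be a bijection. A feedback arc set of $\mathcal{G}$ is a subset of $\mathbb{E}$ meeting every directed cycle. For $v\in\mathbb{V}$ the gadget $\mathcal{N}_v=\langle\mathcal{V}_v,\mathcal{E}_v\rangle$ has vertices $\mathcal{V}_v=\{v_{i,j}:0\le i,j\le m\}$ (distinct for distinct $v$) and arcs $\mathcal{E}_v=\{\langle v_{i,j},v_{i,j+1}\rangle:0\le i\le m,0\le j<m\}\cup\{\langle v_{i,j},v_{i+1,j}\rangle:0\le i<m,0\le j\le m\}$. Let $\mathcal{L}_v=\{\{v_{i,0},\dots,v_{i,m}\}:0\le i\le m\}$ and $\mathcal{R}_v=\{\{v_{0,i},\dots,v_{m,i}\}:0\le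 i\le m\}$. The digraph $\mathcal{P}(\mathcal{G},e)$ has vertex set $\bigcup_{v\in\mathbb{V}}\mathcal{V}_v\cup\mathbb{E}$ (each arc of $\mathcal{G}$ is also a vertex) and arc set $\bigcup_{v\in\mathbb{V}}\mathcal{E}_v\cup\{\langle\langle v,u\rangle,v_{e(\langle v,u\rangle),0}\rangle:\langle v,u\rangle\in\mathbb{E}\}\cup\{\langle\langle v,u\rangle,u_{0,e(\langle v,u\rangle)}\rangle:\langle v,u\rangle\in\mathbb{E}\}$; it is a DAG. For a DAG $G$, a partition $\pi$ of its vertex set is an $\mathcal{H}^{(\ast)}$-partition if every induced subgraph $G[P]$, $P\in\pi$, has a directed Hamiltonian path and the quotient digraph $G/\pi$ (vertex set $\pi$, arc $\langle P,Q\rangle$ for $P\ne Q$ whenever some arc of $G$ goes from $P$ to $Q$) is acyclic. For such $\pi$ of $\mathcal{P}(\mathcal{G},e)$ and $v\in\mathbb{V}$, let $\pi|_{\mathcal{N}_v}=\{P\cap\mathcal{V}_v:P\in\pi,\ P\cap\mathcal{V}_v\ne\emptyset\}$; the gadget $\mathcal{N}_v$ is well-oriented in $\pi$ if $\pi|_{\mathcal{N}_v}=\mathcal{L}_v$ or $\pi|_{\mathcal{N}_v}=\mathcal{R}_v$. *)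

From mathcomp Require Import all_boot.
Set Implicit Arguments. Unset Strict Implicit. Unset Printing Implicit Defensive.

Definition dcycle (T : finType) (r : rel T) (c : seq T) : Prop :=
  [/\ c != [::], uniq c & cycle r c].

Definition cycle_arcs (T : Type) (c : seq T) : seq (T * T) := zip c (rot 1 c).

Definition acyclic (T : finType) (r : rel T) : Prop :=
  forall c : seq T, c != [::] -> ~~ cycle r c.

Definition ham_path (T : finType) (r : rel T) (P : {set T}) : Prop :=
  exists s : seq T, [/\ uniq s, (forall x, (x \in s) = (x \in P)) & sorted r s].

Definition quot_arc (T : finType) (r : rel T) (pi : {set {set T}}) : rel {set T} :=
  fun P Q => [&& P \in pi, Q \in pi, P != Q &
                 [exists x in P, exists y in Q, r x y]].

Definition Hstar_partition (T : finType) (r : rel T) (pi : {set {set T}}) : Prop :=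
  [/\ partition pi [set: T],
      (forall P, P \in pi -> ham_path r P) &
      acyclic (quot_arc r pi)].

Definition garc (V : finType) (E : {set V * V}) : rel V := fun x y => (x, y) \in E.

Definition feedback_arc_set (V : finType) (E F : {set V * V}) : Prop :=
  F \subset E /\
  forall c : seq V, dcycle (garc E) c -> exists2 a, a \in F & a \in cycle_arcs c.

Section Construction.
Variables (V : finType) (E : {set V * V}) (e : V * V -> nat).

Definition mE := #|E|.
Definition EV := {a : V * V | a \in E}.
(* gadget vertex v_{i,j} = inl (v, i, j); arc vertex a = inr a *)
Definition PV := ((V * 'I_mE.+1 * 'I_mE.+1) + EV)%type.

Definition Parc : rel PV := fun x y =>
  match x, y with
  | inl (v, i, j), inl (v', i', j') =>
      (v == v') && (((i == i') && (nat_of_ord j' == j.+1))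
                    || ((j == j') && (nat_of_ord i' == i.+1)))
  | inr a, inl (w, i, j) =>
      ((w == (val a).1) && (nat_of_ord i == e (val a)) && (nat_of_ord j == 0))
      || ((w == (val a).2) && (nat_of_ord i == 0) && (nat_of_ord j == e (val a)))
  | _, _ => false
  end.

Definition gadget (v : V) : {set PV} :=
  [set x : PV | if x is inl (w, _, _) then w == v else false].

Definition Lrows (v : V) : {set {set PV}} :=
  [set [set (inl (v, i, j) : PV) | j : 'I_mE.+1] | i : 'I_mE.+1].
Definition Rcols (v : V) : {set {set PV}} :=
  [set [set (inl (v, j, i) : PV) | j : 'I_mE.+1] | i : 'I_mE.+1].

Definition restr (pi : {set {set PV}}) (v : V) : {set {set PV}} :=
  [set P :&: gadget v | P in pi & P :&: gadget v != set0].

Definition well_oriented (pi : {set {set PV}}) (v : V) : bool :=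
  (restr pi v == Lrows v) || (restr pi v == Rcols v).

Definition singleton_arcs (pi : {set {set PV}}) : {set V * V} :=
  [set a : V * V | [exists b : EV, (val b == a) && ([set (inr b : PV)] \in pi)]].

End Construction.

From mathcomp Require Import all_boot.
Set Implicit Arguments. Unset Strict Implicit. Unset Printing Implicit Defensive.

(* An arc vertex b = <u,x> of P(G,e) has no in-arcs and its only out-arcs go to
   u_{e,0} and x_{0,e}; since i + j increases along every arc, the block of b is
   a Hamiltonian path starting at b that never meets an origin v_{0,0}.  If x is
   row-oriented, x_{0,e} lies in the block of x_{0,0}, so a non-singleton block
   of b must continue into u_{e,0}; were u column-oriented, that cell would share
   the block of u_{0,0}, so u is row-oriented too, and the quotient has a
   nonempty path from the block of u_{0,0} through that of b to that of x_{0,0}.  Dually, column orientation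
   propagates forward along non-singleton arcs with quotient paths reversed.
   Hence a cycle of G without singleton arcs would close a cycle in the acyclic
   quotient.  For the bound, the |V|(|E|+1) rows or columns of the gadgets are
   pairwise distinct blocks, disjoint from the singleton arc blocks. *)

Section PathFacts.
Variables (T : finType) (r : rel T).

Lemma connect_forward (P : pred T) x y :
  (forall a b, r a b -> P a -> P b) -> connect r x y -> P x -> P y.
Proof.
move=> rP /connectP[p + ->]; elim: p x => //= z p IH x /andP[rxz pzp] Px.
exact: IH pzp (rP _ _ rxz Px).
Qed.

Lemma sorted_connect s x y :
  sorted r s -> x \in s -> y \in s -> connect r x y || connect r y x.
Proof.
move=> + xs; case/splitPr: xs => p1 p2.
rewrite sorted_cat_cons => /andP[sp1 pp2].
rewrite mem_cat => /orP[yp1 | yp2]; last first.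
  by rewrite (path_connect pp2) // inE yp2 orbT.
case/splitPr: yp1 sp1 => q1 q2; rewrite rcons_cat sorted_cat_cons => /andP[_ /path_connect yx].
by rewrite yx ?orbT // inE mem_rcons mem_head orbT.
Qed.

Lemma sorted_source s z :
  sorted r s -> z \in s -> (forall y, ~~ r y z) -> exists s', s = z :: s'.
Proof.
move=> + zs; case/splitPr: zs => p1 p2; case/lastP: p1 => [|q y] /=; first by exists p2.
by rewrite cat_rcons sorted_cat_cons => /andP[_ /= /andP[ryz _]] /(_ y); rewrite ryz.
Qed.

Lemma cycle_arcsE c : cycle r c = all (fun a => r a.1 a.2) (cycle_arcs c).
Proof.
case: c => [|x s] //; rewrite /cycle_arcs rot1_cons /=.
by elim: s {1 3}x => [|y s IH] z //=; rewrite IH.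
Qed.

End PathFacts.

Section CycleOrientation.
Variable T : eqType.

Lemma cycle_backward_closed (r S : rel T) (P : pred T) c x :
  transitive S -> (forall u y, r u y -> P y -> P u /\ S u y) ->
  cycle r c -> x \in c -> P x -> S x x.
Proof.
move=> trS step + /rot_to[i s rot_c] Px; rewrite -(rot_cycle i) rot_c /=.
suff key t y : path r y (rcons t x) -> P y /\ S y x by case/key.
elim: t y => [|w t IH] y /=; first by rewrite andbT => /step/(_ Px).
case/andP=> ryw /IH[Pw Swx]; have [Py Syw] := step _ _ ryw Pw.
by split; last exact: trS Syw Swx.
Qed.

Lemma cycle_oriented_loop (r S : rel T) (P : pred T) c :
  transitive S ->
  (forall u y, r u y -> P y -> P u /\ S u y) ->
  (forall u y, r u y -> ~~ P u -> ~~ P y /\ S y u) ->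
  cycle r c -> c != [::] -> exists x, S x x.
Proof.
move=> trS stepP stepN cyc; case: c cyc => // x s cyc _; exists x.
have xc : x \in x :: s by rewrite mem_head.
have [Px|nPx] := boolP (P x); first exact: cycle_backward_closed stepP cyc xc Px.
apply: (@cycle_backward_closed (fun u y => r y u) S (predC P) (rev (x :: s))) nPx => //.
- by move=> u y /stepN.
- by rewrite rev_cycle.
- by rewrite mem_rev.
Qed.

End CycleOrientation.

Definition tconnect (T : finType) (q : rel T) : rel T :=
  fun x y => [exists z, exists w, [&& connect q x z, q z w & connect q w y]].

Lemma tconnect_trans (T : finType) (q : rel T) : transitive (tconnect q).
Proof.
move=> y x z /existsP[a /existsP[b /and3P[xa ab b_y]]].
move=> /existsP[c /existsP[d /and3P[yc cd dz]]].
apply/existsP; exists a; apply/existsP; exists b; rewrite xa ab /=.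
exact: connect_trans b_y (connect_trans (connect_trans yc (connect1 cd)) dz).
Qed.

Lemma acyclic_tconnect (T : finType) (q : rel T) x : acyclic q -> ~~ tconnect q x x.
Proof.
move=> acq; apply/existsP => -[z /existsP[w /and3P[xz zw wx]]].
have /connectP[p pth zE] := connect_trans wx xz.
by have /negP := acq (w :: p) isT; apply; rewrite /= rcons_path pth -zE zw.
Qed.

Section Quotient.
Variables (T : finType) (r : rel T) (pi : {set {set T}}).
Hypothesis pi_Hstar : Hstar_partition r pi.

Let pi_cover : cover pi = [set: T].
Proof. by case: pi_Hstar => /and3P[/eqP]. Qed.

Let pi_triv : trivIset pi.
Proof. by case: pi_Hstar => /and3P[]. Qed.

Lemma mem_pblockT x : x \in pblock pi x.
Proof. by rewrite mem_pblock pi_cover inE. Qed.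

Lemma pblockT_mem x : pblock pi x \in pi.
Proof. by rewrite pblock_mem // pi_cover inE. Qed.

Lemma same_pblockT x y : y \in pblock pi x -> pblock pi y = pblock pi x.
Proof. exact: same_pblock. Qed.

Lemma connect_quot x y :
  connect r x y -> connect (quot_arc r pi) (pblock pi x) (pblock pi y).
Proof.
move/connectP=> [p + ->]; elim: p x => //= z p IH x /andP[rxz pzp].
apply: connect_trans (IH _ pzp); have [-> //|neq] := eqVneq (pblock pi x) (pblock pi z).
apply: connect1; rewrite /quot_arc !pblockT_mem neq /=.
by apply/existsP; exists x; rewrite mem_pblockT; apply/existsP; exists z; rewrite mem_pblockT.
Qed.

Lemma tconnect_quot x z z' w :
  connect r x z -> z' \in pblock pi z -> r z' w -> w \notin pblock pi z' ->
  tconnect (quot_arc r pi) (pblock pi x) (pblock pi w).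
Proof.
move=> xz zz' rz'w; rewrite (same_pblockT zz') => wz.
apply/existsP; exists (pblock pi z); apply/existsP; exists (pblock pi w).
rewrite connect_quot // connect0 andbT /quot_arc !pblockT_mem.
rewrite eq_pblock ?pi_cover ?inE // wz /=.
by apply/existsP; exists z'; rewrite zz'; apply/existsP; exists w; rewrite mem_pblockT.
Qed.

Lemma pblock_connect x y : y \in pblock pi x -> connect r x y || connect r y x.
Proof.
case: pi_Hstar => _ /(_ _ (pblockT_mem x))[s [_ memP srt]] _ yx.
by apply: (sorted_connect srt); rewrite memP ?mem_pblockT.
Qed.

Lemma pblock_source z :
  (forall y, ~~ r y z) -> exists s, pblock pi z =i z :: s /\ path r z s.
Proof.
case: pi_Hstar => _ /(_ _ (pblockT_mem z))[s [_ memP srt]] _ src.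
have zs : z \in s by rewrite memP mem_pblockT.
have [s' sE] := sorted_source srt zs src.
by exists s'; rewrite sE in srt memP; split => // y; rewrite -memP.
Qed.

End Quotient.

Section Gadgets.
Variables (V : finType) (E : {set V * V}) (e : V * V -> nat).
Hypothesis e_range : forall a, a \in E -> 0 < e a <= #|E|.
Variable pi : {set {set PV E}}.
Hypothesis pi_Hstar : Hstar_partition (Parc e) pi.
Hypothesis pi_oriented : forall v, well_oriented pi v.

Local Notation T := (PV E).
Local Notation Pr := (@Parc V E e).
Local Notation Ix := 'I_(mE E).+1.
Local Notation blk := (pblock pi).
Local Notation qa := (quot_arc Pr pi).
Local Notation mem_blk := (mem_pblockT pi_Hstar).
Local Notation blk_mem := (pblockT_mem pi_Hstar).
Local Notation same_blk := (same_pblockT pi_Hstar).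

Definition weight (x : T) : nat := if x is inl (_, i, j) then i + j else 0.

Lemma e_ltn (b : EV E) : e (val b) < (mE E).+1.
Proof. by rewrite ltnS; case/andP: (e_range (valP b)). Qed.

Lemma Parc_weight x y : Pr x y -> weight x < weight y.
Proof.
case: x => [[[v i] j]|a]; case: y => [[[w i'] j']|b] //=.
  by case/andP=> _ /orP[]/andP[/eqP <- /eqP ->]; rewrite ?addnS ?addSn ltnSn.
have /andP[e_pos _] := e_range (valP a).
by case/orP=> /andP[/andP[_ /eqP ->] /eqP ->]; rewrite ?addn0.
Qed.

Lemma Parc_gadget v x y : Pr x y -> x \in gadget E v -> y \in gadget E v.
Proof.
case: x => [[[w i] j]|a]; case: y => [[[w' i'] j']|b] //=; rewrite !inE //.
by case/andP=> /eqP ->.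
Qed.

Lemma Parc_inr x b : ~~ Pr x (inr b).
Proof. by case: x => [[[]]|]. Qed.

(* [cell t v i] enumerates row i of the gadget of v if t, column i otherwise;
   with t = rowwise v these lines are exactly the blocks of pi meeting it. *)
Definition cell (t : bool) (v : V) (i j : Ix) : T :=
  if t then inl (v, i, j) else inl (v, j, i).

Definition origin (v : V) : T := inl (v, ord0, ord0).

Definition rowwise (v : V) : bool := restr pi v == Lrows E v.

Lemma cell_gadget t v i j : cell t v i j \in gadget E v.
Proof. by rewrite /cell inE; case: t. Qed.

Lemma gadget_inj x v w : x \in gadget E v -> x \in gadget E w -> v = w.
Proof. by rewrite !inE; case: x => [[[u i] j]|//] /eqP <- /eqP. Qed.

Lemma mem_cell_line t v (i0 i j : Ix) :
  (cell t v i j \in [set cell t v i0 j' | j' : Ix]) = (i == i0).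
Proof.
apply/imsetP/eqP => [[j' _]|->]; last by exists j.
by case: t => -[].
Qed.

Lemma origin_connect v (i j : Ix) : connect Pr (origin v) (inl (v, i, j)).
Proof.
have [n] := ubnP (i + j); elim: n i j => // n IH i [[|j] hj] hn.
  case: i hn => [[|i] hi] hn.
    by apply: eq_connect0; congr (inl (_, _, _)); apply: val_inj.
  apply: connect_trans (IH (Ordinal (ltnW hi)) (Ordinal hj) _) (connect1 _).
    by move: hn; rewrite /= !addn0.
  by rewrite /= !eqxx orbT.
apply: connect_trans (IH i (Ordinal (ltnW hj)) _) (connect1 _).
  by rewrite /= addnS in hn.
by rewrite /= !eqxx.
Qed.

Lemma pblock_gadget v w x y :
  x \in gadget E v -> y \in gadget E w -> y \in blk x -> v = w.
Proof.
move=> xv yw /(pblock_connect pi_Hstar)/orP[] conn.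
  exact: gadget_inj (connect_forward (@Parc_gadget v) conn xv) yw.
exact: gadget_inj xv (connect_forward (@Parc_gadget w) conn yw).
Qed.

Lemma restr_cells v : restr pi v = [set [set cell (rowwise v) v i j | j : Ix] | i : Ix].
Proof.
by have := pi_oriented v; rewrite /well_oriented /rowwise; case: eqP => [->|_ /eqP ->].
Qed.

Lemma cell_blkE v (i j i' j' : Ix) :
  (cell (rowwise v) v i' j' \in blk (cell (rowwise v) v i j)) = (i' == i).
Proof.
set t := rowwise v; set P := blk _.
have : P :&: gadget E v \in restr pi v.
  apply/imsetP; exists P => //; rewrite inE blk_mem /=; apply/set0Pn.
  by exists (cell t v i j); rewrite inE mem_blk cell_gadget.
rewrite restr_cells => /imsetP[i0 _ PvE].
have memP i1 j1 : (cell t v i1 j1 \in P) = (i1 == i0).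
  by rewrite -(mem_cell_line t v i0 i1 j1) -PvE inE cell_gadget andbT.
have i0E : i0 = i by apply/esym/eqP; rewrite -(memP i j) mem_blk.
by rewrite memP i0E.
Qed.

Lemma origin_cell v k : cell (rowwise v) v ord0 k \in blk (origin v).
Proof.
have -> : origin v = cell (rowwise v) v ord0 ord0 by case: rowwise.
by rewrite cell_blkE.
Qed.

Lemma origin_notin_arc_blk b v : origin v \notin blk (inr b).
Proof.
have [s [blkE pth]] := pblock_source pi_Hstar (Parc_inr^~ b).
have /allP weight_lt := order_path_min (fun _ _ _ => @ltn_trans _ _ _)
  (sub_path Parc_weight pth).
by rewrite blkE inE negb_or /=; apply/negP => /weight_lt.
Qed.

Lemma cell0_notin_arc_blk b v k : cell (rowwise v) v ord0 k \notin blk (inr b).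
Proof.
apply: contra (origin_notin_arc_blk b v) => ck.
by rewrite -(same_blk ck) (same_blk (origin_cell v k)) mem_blk.
Qed.

Definition tail_port (b : EV E) : T := cell false (val b).1 ord0 (inord (e (val b))).
Definition head_port (b : EV E) : T := cell true (val b).2 ord0 (inord (e (val b))).

Lemma Parc_tail_port b : Pr (inr b) (tail_port b).
Proof. by rewrite /= inordK ?e_ltn // !eqxx. Qed.

Lemma Parc_head_port b : Pr (inr b) (head_port b).
Proof. by rewrite /= inordK ?e_ltn // !eqxx orbT. Qed.

Lemma arc_blk_port b :
  [set inr b] \notin pi -> tail_port b \in blk (inr b) \/ head_port b \in blk (inr b).
Proof.
move=> nsing; have [s [blkE pth]] := pblock_source pi_Hstar (Parc_inr^~ b).
case: s blkE pth => [|y s] blkE pth.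
  have blk1 : blk (inr b) = [set inr b] by apply/setP => x; rewrite blkE !inE.
  by have := blk_mem (inr b); rewrite blk1 (negbTE nsing).
have yb : y \in blk (inr b) by rewrite blkE !inE eqxx orbT.
case/andP: pth yb => + _; clear blkE; case: y => [[[w i] j]|//] /=.
case/orP=> /andP[/andP[/eqP -> /eqP ie] /eqP je] yb; [left | right].
- suff [iE jE] : i = inord (e (val b)) /\ j = ord0 by rewrite /tail_port /= -iE -jE.
  by split; apply: val_inj; rewrite //= inordK ?e_ltn.
- suff [iE jE] : i = ord0 /\ j = inord (e (val b)) by rewrite /head_port /= -iE -jE.
  by split; apply: val_inj; rewrite //= inordK ?e_ltn.
Qed.

Lemma tail_port_rowwise b : tail_port b \in blk (inr b) -> rowwise (val b).1.
Proof.
apply: contraLR => /negbTE rw.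
by have := cell0_notin_arc_blk b (val b).1 (inord (e (val b))); rewrite rw.
Qed.

Lemma head_port_colwise b : head_port b \in blk (inr b) -> ~~ rowwise (val b).2.
Proof.
apply: contraL => rw.
by have := cell0_notin_arc_blk b (val b).2 (inord (e (val b))); rewrite rw.
Qed.

Lemma arc_step_rowwise b :
  [set inr b] \notin pi -> rowwise (val b).2 ->
  rowwise (val b).1 /\ tconnect qa (blk (origin (val b).1)) (blk (origin (val b).2)).
Proof.
move=> nsing rw2.
have tail_in : tail_port b \in blk (inr b).
  by case: (arc_blk_port nsing) => // /head_port_colwise; rewrite rw2.
split; first exact: tail_port_rowwise.
have := origin_cell (val b).2 (inord (e (val b))); rewrite rw2 => /same_blk <-.
have tail_conn : connect Pr (origin (val b).1) (tail_port b) := origin_connect _ _ _.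
apply: (tconnect_quot pi_Hstar tail_conn _ (Parc_head_port b)).
  by rewrite (same_blk tail_in) mem_blk.
by apply/negP => /head_port_colwise; rewrite rw2.
Qed.

Lemma arc_step_colwise b :
  [set inr b] \notin pi -> ~~ rowwise (val b).1 ->
  ~~ rowwise (val b).2 /\ tconnect qa (blk (origin (val b).2)) (blk (origin (val b).1)).
Proof.
move=> nsing /negbTE rw1.
have head_in : head_port b \in blk (inr b).
  by case: (arc_blk_port nsing) => // /tail_port_rowwise; rewrite rw1.
split; first exact: head_port_colwise.
have := origin_cell (val b).1 (inord (e (val b))); rewrite rw1 => /same_blk <-.
have head_conn : connect Pr (origin (val b).2) (head_port b) := origin_connect _ _ _.
apply: (tconnect_quot pi_Hstar head_conn _ (Parc_tail_port b)).
  by rewrite (same_blk head_in) mem_blk.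
by apply/negP => /tail_port_rowwise; rewrite rw1.
Qed.

Definition nonsingleton_arc (u x : V) : bool :=
  ((u, x) \in E) && ((u, x) \notin singleton_arcs pi).

Lemma nonsingleton_arc_blk u x :
  nonsingleton_arc u x -> exists2 b : EV E, val b = (u, x) & [set inr b] \notin pi.
Proof.
case/andP=> uxE nsing; exists (exist _ (u, x) uxE : EV E) => //.
apply: contra nsing => sing; rewrite inE; apply/existsP.
by exists (exist _ (u, x) uxE : EV E); rewrite eqxx sing.
Qed.

Lemma singleton_arcs_fas : feedback_arc_set E (singleton_arcs pi).
Proof.
split.
  by apply/subsetP => a; rewrite inE => /existsP[b /andP[/eqP <- _]]; apply: valP.
move=> c [c_n0 _ cyc].
have [/hasP[a aF ac]|/hasPn noF] := boolP (has (mem (singleton_arcs pi)) (cycle_arcs c)).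
  by exists a.
have {}cyc : cycle nonsingleton_arc c.
  move: cyc; rewrite !cycle_arcsE => /allP cycE; apply/allP => a ac.
  by have := cycE a ac; rewrite /garc /nonsingleton_arc -surjective_pairing => ->; apply: noF.
pose S u y := tconnect qa (blk (origin u)) (blk (origin y)).
have [x] : exists x, S x x.
  apply: (cycle_oriented_loop (P := rowwise) _ _ _ cyc c_n0).
  - by move=> ? ? ?; apply: tconnect_trans.
  - by move=> u y /nonsingleton_arc_blk[[[? ?] ?] /= [<- <-] /arc_step_rowwise].
  - by move=> u y /nonsingleton_arc_blk[[[? ?] ?] /= [<- <-] /arc_step_colwise].
case: pi_Hstar => _ _ acyclic_qa.
by rewrite /S (negbTE (acyclic_tconnect _ acyclic_qa)).
Qed.

Definition line_blk (p : V * Ix) : {set T} := blk (cell (rowwise p.1) p.1 p.2 ord0).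

Lemma line_blk_inj : injective line_blk.
Proof.
move=> [v i] [w j]; rewrite /line_blk /= => eq_blk.
have vw : v = w.
  apply: (pblock_gadget (cell_gadget (rowwise v) v i ord0)
                        (cell_gadget (rowwise w) w j ord0)).
  by rewrite eq_blk mem_blk.
subst w; have := mem_blk (cell (rowwise v) v j ord0).
by rewrite -eq_blk cell_blkE => /eqP ->.
Qed.

Lemma singleton_arcs_card : #|singleton_arcs pi| + #|V| * (#|E| + 1) <= #|pi|.
Proof.
set lines := [set line_blk p | p in [set: V * Ix]].
set B := [set b : EV E | [set (inr b : T)] \in pi].
set singles := [set [set (inr b : T)] | b in B].
have card_lines : #|lines| = #|V| * (#|E| + 1).
  by rewrite card_imset ?cardsT ?card_prod ?card_ord ?addn1 //; apply: line_blk_inj.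
have card_singles : #|singles| = #|B|.
  rewrite card_imset // => b1 b2 /setP/(_ (inr b1)).
  by rewrite !inE eqxx => /esym/eqP[].
have card_arcs : #|singleton_arcs pi| = #|B|.
  rewrite -(card_imset _ val_inj); apply: eq_card => a; rewrite inE.
  apply/existsP/imsetP => [[b /andP[/eqP <- sb]]|[b sb ->]]; first by exists b; rewrite ?inE.
  by exists b; rewrite eqxx; rewrite inE in sb.
have disj : [disjoint lines & singles].
  apply/pred0P => X /=; apply/negP => /andP[/imsetP[[v i] _ ->] /imsetP[b _ lineE]].
  move: lineE; rewrite /line_blk /= => lineE.
  by have := mem_blk (cell (rowwise v) v i ord0); rewrite lineE inE; case: rowwise.
have sub : lines :|: singles \subset pi.
  apply/subsetP => X; rewrite inE => /orP[/imsetP[p _ ->]|/imsetP[b + ->]].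
    exact: blk_mem.
  by rewrite inE.
move: (subset_leq_card sub).
by rewrite cardsU disjoint_setI0 ?cards0 ?subn0 // card_lines card_singles card_arcs addnC.
Qed.

End Gadgets.

Theorem lemma5p9 (V : finType) (E : {set V * V}) (e : V * V -> nat)
  (HV : 0 < #|V|)
  (Hloop : forall v : V, (v, v) \notin E)
  (Hdeg : forall v : V,
      #|[set u : V | (u, v) \in E]| = 1 \/ #|[set u : V | (v, u) \in E]| = 1)
  (He_inj : {in E &, injective e})
  (He_rng : forall a, a \in E -> 0 < e a <= #|E|)
  (pi : {set {set PV E}})
  (Hpi : Hstar_partition (Parc e) pi)
  (Hwo : forall v : V, well_oriented pi v) :
  feedback_arc_set E (singleton_arcs pi) /\
  #|singleton_arcs pi| + #|V| * (#|E| + 1) <= #|pi|.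
Proof.
split; first exact: (singleton_arcs_fas He_rng Hpi Hwo).
exact: (singleton_arcs_card Hpi Hwo).
Qed.
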